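(* Let $F(V)$ be the set of formulas of $\mathrm{q}\L^{*}$ and define $p\sim q$ iff $\vdash p\leftrightarrow q$ (for $p,q\in F(V)$). Then $\sim$ is a congruence on $F(V)$ with respect to the connectives $\to$, $\neg$, ${}^{+}$ and ${}^{-}$.
   Context: Let $V=\{p_1,p_2,\ldots\}$ be a set of propositional variables and $F(V)$ the set of formulas built from $V$ and the constant $1$ with the binary connective $\to$ and the unary connectives $\neg$, ${}^{+}$, ${}^{-}$ (postfix ${}^+,{}^-$ bind tighter than $\neg$, which binds tighter than $\to$). Abbreviations: $p\vee q:=((p^{+}\to q^{+})^{+}\to(\neg p)^{-})\to((q^{-}\to p^{-})^{-}\to p^{-})$; an axiom written $A\leftrightarrow B$ stands for the two axioms $A\to B$ and $B\to A$, and $\vdash A\leftrightarrow B$ means $\vdash A\to B$ and $\vdash B\to A$. Axiom schemas of $\mathrm{q}\L^{*}$ (for all formulas $p,q,r$): (Q1) $(p\to q)\leftrightarrow(\neg q\to\neg p)$; (Q2) $1\leftrightarrow((1\to p)\to 1)$; (Q3) $p\leftrightarrow((q\to q)\to p)$; (Q4) $(p\to q)\leftrightarrow((q^{+}\to p^{-})\to(p^{+}\to q^{-}))$; (Q5) $\neg(p\to q)\leftrightarrow(q\to p)$; (Q6) $(p\to(\neg p\to q))^{+}\leftrightarrow(p^{+}\to(\neg p^{+}\to q^{+}))$; (Q7) $(p\to(q\vee r))\leftrightarrow((p\to r)\vee(p\to q))$; (Q8) $(p\vee(q\vee r))\leftrightarrow((p\vee q)\vee r)$; (Q9) $((p\to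 1)\to((q\to 1)\to r))\to((q\to 1)\to((p\to 1)\to r))$; (Q10) $p\to 1$; (Q11) $((1\to 1)\to p^{+})\leftrightarrow((p\to 1)\to 1)$ and $((1\to 1)\to p^{-})\leftrightarrow((p\to\neg 1)\to\neg 1)$. Deduction rules: (R1) from $p$ and $p\to q$ infer $(r\to r)\to q$; (R2) from $(r\to r)\to(p\to q)$ infer $p\to q$; (R3) from $p\to q$ and $r\to t$ infer $(q\to r)\to(p\to t)$. A proof of $q_n$ is a finite sequence $q_1,\dots,q_n$ each of which is an axiom or obtained from earlier members by a rule; then $\vdash q_n$. *)

From Stdlib Require Import Arith.

Inductive form : Type :=
| Var : nat -> form
| One : form
| Imp : form -> form -> form
| Neg : form -> form
| Plus : form -> form
| Minus : form -> form.

Definition Or (p q : form) : form :=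
  Imp (Imp (Plus (Imp (Plus p) (Plus q))) (Minus (Neg p)))
      (Imp (Minus (Imp (Minus q) (Minus p))) (Minus p)).

(* Axiom schemas (Q1)-(Q11); A <-> B stands for both A -> B and B -> A. *)
Inductive axiom : form -> Prop :=
| Q1a p q : axiom (Imp (Imp p q) (Imp (Neg q) (Neg p)))
| Q1b p q : axiom (Imp (Imp (Neg q) (Neg p)) (Imp p q))
| Q2a p : axiom (Imp One (Imp (Imp One p) One))
| Q2b p : axiom (Imp (Imp (Imp One p) One) One)
| Q3a p q : axiom (Imp p (Imp (Imp q q) p))
| Q3b p q : axiom (Imp (Imp (Imp q q) p) p)
| Q4a p q : axiom (Imp (Imp p q) (Imp (Imp (Plus q) (Minus p)) (Imp (Plus p) (Minus q))))
| Q4b p q : axiom (Imp (Imp (Imp (Plus q) (Minus p)) (Imp (Plus p) (Minus q))) (Imp p q))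
| Q5a p q : axiom (Imp (Neg (Imp p q)) (Imp q p))
| Q5b p q : axiom (Imp (Imp q p) (Neg (Imp p q)))
| Q6a p q : axiom (Imp (Plus (Imp p (Imp (Neg p) q)))
                       (Imp (Plus p) (Imp (Neg (Plus p)) (Plus q))))
| Q6b p q : axiom (Imp (Imp (Plus p) (Imp (Neg (Plus p)) (Plus q)))
                       (Plus (Imp p (Imp (Neg p) q))))
| Q7a p q r : axiom (Imp (Imp p (Or q r)) (Or (Imp p r) (Imp p q)))
| Q7b p q r : axiom (Imp (Or (Imp p r) (Imp p q)) (Imp p (Or q r)))
| Q8a p q r : axiom (Imp (Or p (Or q r)) (Or (Or p q) r))
| Q8b p q r : axiom (Imp (Or (Or p q) r) (Or p (Or q r)))
| Q9 p q r : axiom (Imp (Imp (Imp p One) (Imp (Imp q One) r))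
                        (Imp (Imp q One) (Imp (Imp p One) r)))
| Q10 p : axiom (Imp p One)
| Q11a p : axiom (Imp (Imp (Imp One One) (Plus p)) (Imp (Imp p One) One))
| Q11b p : axiom (Imp (Imp (Imp p One) One) (Imp (Imp One One) (Plus p)))
| Q11c p : axiom (Imp (Imp (Imp One One) (Minus p)) (Imp (Imp p (Neg One)) (Neg One)))
| Q11d p : axiom (Imp (Imp (Imp p (Neg One)) (Neg One)) (Imp (Imp One One) (Minus p))).

(* Provability: closure of the axioms under rules R1-R3
   (equivalent to existence of a finite proof sequence). *)
Inductive provable : form -> Prop :=
| PAx p : axiom p -> provable p
| PR1 p q r : provable p -> provable (Imp p q) -> provable (Imp (Imp r r) q)
| PR2 p q r : provable (Imp (Imp r r) (Imp p q)) -> provable (Imp p q)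
| PR3 p q r t : provable (Imp p q) -> provable (Imp r t) ->
                provable (Imp (Imp q r) (Imp p t)).

Definition equiv (p q : form) : Prop := provable (Imp p q) /\ provable (Imp q p).


(* Rules R1 and R2 combine into modus ponens under a premise, and R3 then gives
   transitivity of provable implication; with that, R3 alone is the congruence
   for [->].  Contraposition (Q1) gives the congruence for [neg].  The axioms Q3
   and Q11 make [p+] equivalent to [(p -> 1) -> 1] and [p-] equivalent to
   [(p -> neg 1) -> neg 1], which reduces [+] and [-] to the case of [->]. *)

Lemma provable_imp_refl p : provable (Imp p p).
Proof.
  set (t := Imp (Imp One One) p).
  apply (PR2 p p t).
  apply (PR3 p t t p); apply PAx; [apply Q3a | apply Q3b].
Qed.

Lemma provable_mp_imp a b c :
  provable a -> provable (Imp a (Imp b c)) -> provable (Imp b c).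
Proof.
  intros Ha Habc.
  apply (PR2 b c One).
  exact (PR1 _ _ One Ha Habc).
Qed.

Lemma provable_imp_trans p q r :
  provable (Imp p q) -> provable (Imp q r) -> provable (Imp p r).
Proof.
  intros Hpq Hqr.
  apply (provable_mp_imp (Imp q r)); [exact Hqr |].
  apply PR3; [exact Hpq | apply provable_imp_refl].
Qed.

Lemma equiv_refl p : equiv p p.
Proof. split; apply provable_imp_refl. Qed.

Lemma equiv_sym p q : equiv p q -> equiv q p.
Proof. intros [Hpq Hqp]; split; assumption. Qed.

Lemma equiv_trans p q r : equiv p q -> equiv q r -> equiv p r.
Proof.
  intros [Hpq Hqp] [Hqr Hrq].
  split; eapply provable_imp_trans; eassumption.
Qed.

Lemma equiv_axiom p q : axiom (Imp p q) -> axiom (Imp q p) -> equiv p q.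
Proof. intros Hpq Hqp; split; apply PAx; assumption. Qed.

Lemma equiv_imp p p' q q' :
  equiv p p' -> equiv q q' -> equiv (Imp p q) (Imp p' q').
Proof. intros [Hpp' Hp'p] [Hqq' Hq'q]; split; apply PR3; assumption. Qed.

Lemma equiv_neg p p' : equiv p p' -> equiv (Neg p) (Neg p').
Proof.
  intros [Hpp' Hp'p]; split.
  - apply (provable_mp_imp (Imp p' p)); [exact Hp'p | apply PAx, Q1a].
  - apply (provable_mp_imp (Imp p p')); [exact Hpp' | apply PAx, Q1a].
Qed.

Lemma equiv_top_imp p : equiv p (Imp (Imp One One) p).
Proof. apply equiv_axiom; [apply Q3a | apply Q3b]. Qed.

Lemma equiv_congr_transfer (F G : form -> form) :
  (forall p, equiv (Imp (Imp One One) (F p)) (G p)) ->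
  (forall p p', equiv p p' -> equiv (G p) (G p')) ->
  forall p p', equiv p p' -> equiv (F p) (F p').
Proof.
  intros HFG HG p p' Hp.
  apply (equiv_trans _ _ _ (equiv_top_imp _)).
  apply (equiv_trans _ _ _ (HFG p)).
  apply (equiv_trans _ _ _ (HG p p' Hp)).
  apply (equiv_trans _ _ _ (equiv_sym _ _ (HFG p'))).
  apply equiv_sym, equiv_top_imp.
Qed.

Lemma equiv_imp_imp c p p' : equiv p p' -> equiv (Imp (Imp p c) c) (Imp (Imp p' c) c).
Proof. intros Hp; apply equiv_imp; [apply equiv_imp |]; auto using equiv_refl. Qed.

Lemma equiv_plus p p' : equiv p p' -> equiv (Plus p) (Plus p').
Proof.
  apply (equiv_congr_transfer Plus (fun p => Imp (Imp p One) One)).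
  - intros q; apply equiv_axiom; [apply Q11a | apply Q11b].
  - apply equiv_imp_imp.
Qed.

Lemma equiv_minus p p' : equiv p p' -> equiv (Minus p) (Minus p').
Proof.
  apply (equiv_congr_transfer Minus (fun p => Imp (Imp p (Neg One)) (Neg One))).
  - intros q; apply equiv_axiom; [apply Q11c | apply Q11d].
  - apply equiv_imp_imp.
Qed.

Theorem proposition5p2 :
  (forall p, equiv p p) /\
  (forall p q, equiv p q -> equiv q p) /\
  (forall p q r, equiv p q -> equiv q r -> equiv p r) /\
  (forall p p' q q', equiv p p' -> equiv q q' -> equiv (Imp p q) (Imp p' q')) /\
  (forall p p', equiv p p' -> equiv (Neg p) (Neg p')) /\
  (forall p p', equiv p p' -> equiv (Plus p) (Plus p')) /\
  (forall p p', equiv p p' -> equiv (Minus p) (Minus p')).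
Proof.
  exact (conj equiv_refl (conj equiv_sym (conj equiv_trans
          (conj equiv_imp (conj equiv_neg (conj equiv_plus equiv_minus)))))).
Qed.
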